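(* Let $T>0$ and let $F,G:[0,T]\to\mathbb{R}$ be continuously differentiable functions with $F(0)=0$ and $F(t)>0$ for $t\in(0,T]$. For $\varepsilon>0$ and $t\in(0,T]$ put $$N_\varepsilon(t)=\int_0^t\exp\Big\{-\frac1\varepsilon\int_s^tF(v)\,dv\Big\}G(s)\,ds.$$ Then for any $t\in(0,T]$, as $\varepsilon\to0$, $$N_\varepsilon(t)=\varepsilon\,\frac{G(t)}{F(t)}\big(1+O(\varepsilon)\big).$$ *)

From Stdlib Require Import Reals Lra.
From Coquelicot Require Import Coquelicot.
Open Scope R_scope.

Definition C1_on (a b : R) (f : R -> R) : Prop :=
  exists df : R -> R,
    (forall t, a <= t <= b ->
       filterlim (fun h => (f (t + h) - f t) / h)
         (within (fun h => h <> 0 /\ a <= t + h <= b) (locally 0))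
         (locally (df t))) /\
    (forall t, a <= t <= b ->
       filterlim df (within (fun x => a <= x <= b) (locally t))
         (locally (df t))).

Definition Neps (F G : R -> R) (eps t : R) : R :=
  RInt (fun s => exp (- (1 / eps) * RInt F s t) * G s) 0 t.

From Stdlib Require Import Reals Lra.
From Coquelicot Require Import Coquelicot.
Open Scope R_scope.

(* With the weight E(s) = exp(-(1/eps) int_s^t F), one has eps E' = F E.  On an
   interval [a, t] where F >= m > 0 this gives int_a^t F E = eps (1 - E(a)) and,
   differentiating (t - s) E(s), int_a^t (t - s) E(s) ds <= (eps/m)^2.  Since F
   and G are Lipschitz at t, replacing F(s), G(s) by F(t), G(t) on [a, t] costs
   O(eps^2), so int_a^t E G = eps G(t)/F(t) + O(eps^2) up to a multiple of
   eps E(a).  On [0, a] the weight is at most E(a) <= exp(-m(t - a)/eps), which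
   is O(eps^2) as well.  F and G are first extended continuously to R by
   clamping, so that the integration and differentiation lemmas apply at every
   point. *)

Lemma C1_on_lipschitz_at (a b : R) (f : R -> R) (x : R) :
  C1_on a b f -> a <= x <= b ->
  exists d K, 0 < d /\ 0 < K /\
    forall y, a <= y <= b -> Rabs (y - x) < d -> Rabs (f y - f x) <= K * Rabs (y - x).
Proof.
  intros [df [f_der _]] x_range.
  destruct (proj1 (filterlim_locally _ _) (f_der x x_range) (mkposreal 1 Rlt_0_1))
    as [d slope_near].
  exists d, (Rabs (df x) + 1). split; [apply cond_pos|].
  split; [pose proof (Rabs_pos (df x)); lra|].
  intros y y_range y_near.
  destruct (Req_dec y x) as [<-|y_neq_x].
  { rewrite !Rminus_diag, Rabs_R0. lra. }
  assert (slope : Rabs ((f y - f x) / (y - x) - df x) < 1).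
  { replace y with (x + (y - x)) at 1 by ring.
    apply (slope_near (y - x)).
    - change (Rabs (y - x - 0) < d). now rewrite Rminus_0_r.
    - split; [lra|]. now replace (x + (y - x)) with y by ring. }
  replace (f y - f x) with ((f y - f x) / (y - x) * (y - x)) by (field; lra).
  rewrite Rabs_mult. apply Rmult_le_compat_r; [apply Rabs_pos|].
  pose proof (Rabs_triang_inv ((f y - f x) / (y - x)) (df x)). lra.
Qed.

Definition clamp (a b x : R) : R := Rmax a (Rmin b x).

Lemma clamp_range (a b x : R) : a <= b -> a <= clamp a b x <= b.
Proof. intros; unfold clamp, Rmax, Rmin; repeat destruct Rle_dec; lra. Qed.

Lemma clamp_id (a b x : R) : a <= x <= b -> clamp a b x = x.
Proof. intros; unfold clamp, Rmax, Rmin; repeat destruct Rle_dec; lra. Qed.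

Lemma clamp_1_lipschitz (a b x y : R) :
  a <= b -> Rabs (clamp a b y - clamp a b x) <= Rabs (y - x).
Proof.
  intros; unfold clamp, Rmax, Rmin, Rabs.
  repeat destruct Rle_dec; repeat destruct Rcase_abs; lra.
Qed.

Lemma C1_on_extension (a b : R) (f : R -> R) :
  a <= b -> C1_on a b f ->
  exists g, (forall x, continuous g x) /\ (forall x, a <= x <= b -> g x = f x).
Proof.
  intros a_le_b f_C1. exists (fun y => f (clamp a b y)). split.
  2:{ intros x x_range. now rewrite clamp_id. }
  intros x. apply filterlim_locally. intros e.
  destruct (C1_on_lipschitz_at a b f (clamp a b x) f_C1 (clamp_range a b x a_le_b))
    as [d [K [d_pos [K_pos f_lip]]]].
  assert (delta_pos : 0 < Rmin d (e / K)).
  { apply Rmin_pos; [lra|]. apply Rdiv_lt_0_compat; [apply cond_pos|lra]. }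
  exists (mkposreal _ delta_pos). intros y y_near.
  change (Rabs (y - x) < Rmin d (e / K)) in y_near.
  change (Rabs (f (clamp a b y) - f (clamp a b x)) < e).
  pose proof (clamp_1_lipschitz a b x y a_le_b).
  pose proof (Rmin_l d (e / K)). pose proof (Rmin_r d (e / K)).
  apply Rle_lt_trans with (K * Rabs (y - x)).
  - eapply Rle_trans; [apply f_lip; [apply clamp_range; lra|lra]|].
    apply Rmult_le_compat_l; lra.
  - apply Rmult_lt_reg_r with (/ K); [apply Rinv_0_lt_compat; lra|].
    replace (K * Rabs (y - x) * / K) with (Rabs (y - x)) by (field; lra).
    unfold Rdiv in *. lra.
Qed.

Definition left_lipschitz_at (h : R -> R) (a t K : R) : Prop :=
  forall s, a <= s <= t -> Rabs (h s - h t) <= K * (t - s).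

Lemma C1_on_left_lipschitz_at (T : R) (h : R -> R) (t : R) :
  C1_on 0 T h -> 0 < t <= T -> exists a K, 0 <= a < t /\ left_lipschitz_at h a t K.
Proof.
  intros h_C1 t_range.
  destruct (C1_on_lipschitz_at 0 T h t h_C1 ltac:(lra)) as [d [K [d_pos [_ h_lip]]]].
  exists (Rmax 0 (t - d / 2)), K. split.
  { split; [apply Rmax_l|]. apply Rmax_lub_lt; lra. }
  intros s [a_le_s s_le_t].
  pose proof (Rmax_l 0 (t - d / 2)). pose proof (Rmax_r 0 (t - d / 2)).
  rewrite <- (Rabs_pos_eq (t - s)), (Rabs_minus_sym t s) by lra.
  apply h_lip; [lra|]. rewrite Rabs_minus_sym, Rabs_pos_eq; lra.
Qed.

Lemma left_lipschitz_at_ext (h h' : R -> R) (a t K : R) :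
  (forall s, a <= s <= t -> h s = h' s) ->
  left_lipschitz_at h a t K -> left_lipschitz_at h' a t K.
Proof. intros h_eq h_lip s s_range. rewrite <- !h_eq by lra. now apply h_lip. Qed.

Lemma left_lipschitz_at_shrink (h : R -> R) (a a' t K : R) :
  a <= a' -> left_lipschitz_at h a t K -> left_lipschitz_at h a' t K.
Proof. intros a_le h_lip s s_range. apply h_lip; lra. Qed.

Lemma left_lipschitz_at_nonneg (h : R -> R) (a t K : R) :
  a < t -> left_lipschitz_at h a t K -> 0 <= K.
Proof.
  intros a_lt_t h_lip. pose proof (h_lip a ltac:(lra)). pose proof (Rabs_pos (h a - h t)).
  apply Rmult_le_reg_r with (t - a); lra.
Qed.

Lemma left_lipschitz_at_ge_half (h : R -> R) (a t K : R) :
  a < t -> 0 < h t -> left_lipschitz_at h a t K ->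
  exists a', a <= a' < t /\ forall s, a' <= s <= t -> h t / 2 <= h s.
Proof.
  intros a_lt_t ht_pos h_lip.
  pose proof (left_lipschitz_at_nonneg h a t K a_lt_t h_lip) as K_nonneg.
  set (r := h t / (2 * (K + 1))).
  assert (r_pos : 0 < r) by (apply Rdiv_lt_0_compat; lra).
  exists (Rmax a (t - r)). split; [split; [apply Rmax_l|apply Rmax_lub_lt; lra]|].
  intros s s_range. pose proof (Rmax_l a (t - r)). pose proof (Rmax_r a (t - r)).
  assert (close : Rabs (h s - h t) <= K * r).
  { eapply Rle_trans; [apply h_lip; lra|]. apply Rmult_le_compat_l; lra. }
  assert (Kr_le : K * r <= h t / 2).
  { unfold r. apply Rmult_le_reg_r with (2 * (K + 1)); [lra|].
    field_simplify; [nra|lra]. }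
  pose proof (Rle_abs (h t - h s)). rewrite Rabs_minus_sym in close. lra.
Qed.

Lemma exp_le_exp (x y : R) : x <= y -> exp x <= exp y.
Proof. intros [x_lt_y | <-]; [left; now apply exp_increasing | right; reflexivity]. Qed.

Lemma exp_neg_le_inv (y : R) : 0 < y -> exp (- y) <= / y.
Proof.
  intros y_pos. rewrite exp_Ropp. apply Rinv_le_contravar; [easy|].
  pose proof (exp_ineq1_le y). lra.
Qed.

Lemma exp_neg_le_sqr_inv (y : R) : 0 < y -> exp (- y) <= 4 / y ^ 2.
Proof.
  intros y_pos. rewrite exp_Ropp.
  replace (4 / y ^ 2) with (/ ((y / 2) ^ 2)) by (field; lra).
  apply Rinv_le_contravar; [apply pow_lt; lra|].
  replace (exp y) with (exp (y / 2) ^ 2)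
    by (simpl; rewrite Rmult_1_r, <- exp_plus; f_equal; field).
  pose proof (exp_ineq1_le (y / 2)). apply pow_incr; lra.
Qed.

Ltac solve_continuous :=
  repeat match goal with
  | H : forall x, continuous ?h x |- continuous ?h _ => apply H
  | H : forall x, continuous ?h x |- continuous (fun y => ?h y) _ => apply H
  | |- continuous (fun _ => _) _ => apply continuous_const
  | |- continuous (fun y => y) _ => apply continuous_id
  | |- continuous (fun y => @?u y * @?v y) _ => apply (continuous_mult u v)
  | |- continuous (fun y => @?u y - @?v y) _ => apply (continuous_minus u v)
  | |- continuous (fun y => Rabs (@?u y)) _ =>
      apply (continuous_comp u Rabs); [|apply continuous_Rabs]
  end.

Ltac solve_ex_RInt :=
  apply (ex_RInt_continuous (V := R_CompleteNormedModule)); intros; solve_continuous.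

Lemma RInt_Rminus (f g : R -> R) (a b : R) : ex_RInt f a b -> ex_RInt g a b ->
  RInt (fun x => f x - g x) a b = RInt f a b - RInt g a b.
Proof. exact (RInt_minus (V := R_CompleteNormedModule) f g a b). Qed.

Lemma RInt_Rmult_l (f : R -> R) (c a b : R) : ex_RInt f a b ->
  RInt (fun x => c * f x) a b = c * RInt f a b.
Proof. exact (RInt_scal (V := R_CompleteNormedModule) f a b c). Qed.

Definition laplace_weight (f : R -> R) (eps t s : R) : R :=
  exp (- (1 / eps) * RInt f s t).

Lemma Neps_ext (f f' g g' : R -> R) (eps t : R) : 0 <= t ->
  (forall s, 0 <= s <= t -> f s = f' s) -> (forall s, 0 <= s <= t -> g s = g' s) ->
  Neps f g eps t = Neps f' g' eps t.
Proof.
  intros t_nonneg f_eq g_eq. unfold Neps. apply RInt_ext.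
  rewrite Rmin_left, Rmax_right by lra. intros s s_range.
  rewrite g_eq by lra. do 3 f_equal. apply RInt_ext.
  rewrite Rmin_left, Rmax_right by lra. intros v v_range. apply f_eq; lra.
Qed.

Section LaplaceWeight.
Variables (f : R -> R) (eps t : R).
Hypotheses (f_cont : forall x, continuous f x) (eps_pos : 0 < eps).
Local Notation E := (laplace_weight f eps t).

Lemma is_derive_laplace_weight s : is_derive E s (f s * E s / eps).
Proof.
  assert (int_der : is_derive (fun s => RInt f s t) s (- f s)).
  { apply (is_derive_RInt' f _ s t); [|apply f_cont].
    exists (mkposreal 1 Rlt_0_1). intros y _.
    apply (RInt_correct (V := R_CompleteNormedModule)). solve_ex_RInt. }
  replace (f s * E s / eps) with (scal (- (1 / eps) * - f s) (E s)).
  2:{ unfold scal; simpl; unfold mult; simpl. field. lra. }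
  exact (is_derive_comp exp _ s _ _ (is_derive_exp _) (is_derive_scal _ _ _ _ int_der)).
Qed.

Lemma continuous_laplace_weight s : continuous E s.
Proof.
  apply (ex_derive_continuous (V := R_NormedModule)).
  eexists. apply is_derive_laplace_weight.
Qed.

Lemma laplace_weight_pos s : 0 < E s.
Proof. apply exp_pos. Qed.

Lemma laplace_weight_at_end : E t = 1.
Proof. unfold laplace_weight. now rewrite RInt_point, Rmult_0_r, exp_0. Qed.

Lemma laplace_weight_le s a : s <= a -> (forall x, s < x < a -> 0 <= f x) -> E s <= E a.
Proof.
  intros s_le_a f_nonneg. unfold laplace_weight.
  rewrite <- (RInt_Chasles (V := R_CompleteNormedModule) f s a t) by solve_ex_RInt.
  change (plus ?x ?y) with (x + y).
  assert (0 <= RInt f s a) by (apply RInt_ge_0; [easy|solve_ex_RInt|easy]).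
  assert (0 < 1 / eps) by (apply Rdiv_lt_0_compat; lra).
  apply exp_le_exp. nra.
Qed.

Lemma RInt_mul_laplace_weight a : RInt (fun s => f s * E s) a t = eps * (1 - E a).
Proof.
  pose proof continuous_laplace_weight as E_cont.
  apply is_RInt_unique.
  replace (eps * (1 - E a)) with (minus (eps * E t) (eps * E a)).
  2:{ rewrite laplace_weight_at_end. unfold minus, plus, opp; simpl. ring. }
  apply (is_RInt_derive (fun s => eps * E s)).
  - intros x _. replace (f x * E x) with (eps * (f x * E x / eps)) by (field; lra).
    apply is_derive_scal, is_derive_laplace_weight.
  - intros; solve_continuous.
Qed.

Lemma RInt_moment_laplace_weight a :
  RInt (fun s => (t - s) * f s * E s - eps * E s) a t = - eps * (t - a) * E a.
Proof.
  pose proof continuous_laplace_weight as E_cont.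
  apply is_RInt_unique.
  replace (- eps * (t - a) * E a)
    with (minus (eps * ((t - t) * E t)) (eps * ((t - a) * E a))).
  2:{ unfold minus, plus, opp; simpl. ring. }
  apply (is_RInt_derive (fun s => eps * ((t - s) * E s))).
  - intros x _.
    replace ((t - x) * f x * E x - eps * E x) with
      (eps * (plus (mult (-1) (E x)) (mult (t - x) (f x * E x / eps)))).
    2:{ unfold plus, mult; simpl. field. lra. }
    apply is_derive_scal, (is_derive_mult (fun s => t - s) E).
    + auto_derive; [easy|ring].
    + apply is_derive_laplace_weight.
    + intros; apply Rmult_comm.
  - intros; solve_continuous.
Qed.

Lemma Neps_sub_leading (g : R -> R) (a : R) :
  (forall x, continuous g x) -> f t <> 0 ->
  Neps f g eps t - eps * (g t / f t) =
  RInt (fun s => E s * g s) 0 a + RInt (fun s => (g s - g t) * E s) a t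
  - g t / f t * (RInt (fun s => (f s - f t) * E s) a t + eps * E a).
Proof.
  intros g_cont ft_neq0. pose proof continuous_laplace_weight as E_cont.
  unfold Neps.
  change (fun s => exp (- (1 / eps) * RInt f s t) * g s) with (fun s => E s * g s).
  rewrite <- (RInt_Chasles (V := R_CompleteNormedModule) _ 0 a t) by solve_ex_RInt.
  change (plus ?x ?y) with (x + y).
  assert (g_part : RInt (fun s => (g s - g t) * E s) a t
                   = RInt (fun s => E s * g s) a t - g t * RInt E a t).
  { rewrite <- RInt_Rmult_l, <- RInt_Rminus by solve_ex_RInt.
    apply RInt_ext. intros x _. simpl. ring. }
  assert (f_part : RInt (fun s => (f s - f t) * E s) a t
                   = eps * (1 - E a) - f t * RInt E a t).
  { rewrite <- RInt_mul_laplace_weight, <- RInt_Rmult_l, <- RInt_Rminus by solve_ex_RInt.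
    apply RInt_ext. intros x _. simpl. ring. }
  rewrite g_part, f_part. field. exact ft_neq0.
Qed.

Section Bounds.
Variables (a m : R).
Hypotheses (a_lt_t : a < t) (m_pos : 0 < m) (f_ge_m : forall s, a <= s <= t -> m <= f s).

Lemma laplace_weight_le_exp : E a <= exp (- (m * (t - a) / eps)).
Proof.
  unfold laplace_weight. apply exp_le_exp.
  assert (mass_le : RInt (fun _ => m) a t <= RInt f a t).
  { apply RInt_le; [lra|solve_ex_RInt|solve_ex_RInt|intros x x_range; apply f_ge_m; lra]. }
  rewrite RInt_const in mass_le. change (scal (t - a) m) with ((t - a) * m) in mass_le.
  replace (- (m * (t - a) / eps)) with (- (1 / eps) * ((t - a) * m)) by (field; lra).
  assert (0 < 1 / eps) by (apply Rdiv_lt_0_compat; lra). nra.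
Qed.

Lemma laplace_weight_le_inv : E a <= eps / (m * (t - a)).
Proof.
  eapply Rle_trans; [apply laplace_weight_le_exp|].
  assert (0 < m * (t - a)) by (apply Rmult_lt_0_compat; lra).
  replace (eps / (m * (t - a))) with (/ (m * (t - a) / eps)) by (field; lra).
  apply exp_neg_le_inv, Rdiv_lt_0_compat; lra.
Qed.

Lemma laplace_weight_le_sqr_inv : E a <= 4 / (m * (t - a)) ^ 2 * eps ^ 2.
Proof.
  eapply Rle_trans; [apply laplace_weight_le_exp|].
  assert (0 < m * (t - a)) by (apply Rmult_lt_0_compat; lra).
  replace (4 / (m * (t - a)) ^ 2 * eps ^ 2) with (4 / (m * (t - a) / eps) ^ 2) by (field; lra).
  apply exp_neg_le_sqr_inv, Rdiv_lt_0_compat; lra.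
Qed.

Lemma RInt_laplace_weight_le : RInt E a t <= eps / m.
Proof.
  pose proof continuous_laplace_weight as E_cont.
  assert (mass_le : m * RInt E a t <= eps * (1 - E a)).
  { rewrite <- RInt_Rmult_l, <- RInt_mul_laplace_weight by solve_ex_RInt.
    apply RInt_le; [lra|solve_ex_RInt|solve_ex_RInt|]. intros x x_range.
    apply Rmult_le_compat_r; [left; apply laplace_weight_pos|apply f_ge_m; lra]. }
  pose proof (laplace_weight_pos a).
  apply Rmult_le_reg_l with m; [lra|].
  replace (m * (eps / m)) with eps by (field; lra). nra.
Qed.

Lemma RInt_dist_laplace_weight_le : RInt (fun s => (t - s) * E s) a t <= (eps / m) ^ 2.
Proof.
  pose proof continuous_laplace_weight as E_cont.
  pose proof (RInt_moment_laplace_weight a) as moment.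
  rewrite RInt_Rminus, RInt_Rmult_l in moment by solve_ex_RInt.
  assert (weighted_le : m * RInt (fun s => (t - s) * E s) a t
                        <= RInt (fun s => (t - s) * f s * E s) a t).
  { rewrite <- RInt_Rmult_l by solve_ex_RInt.
    apply RInt_le; [lra|solve_ex_RInt|solve_ex_RInt|]. intros x x_range.
    replace ((t - x) * f x * E x) with (f x * ((t - x) * E x)) by ring.
    apply Rmult_le_compat_r; [|apply f_ge_m; lra].
    apply Rmult_le_pos; [lra|left; apply laplace_weight_pos]. }
  assert (boundary_nonneg : 0 <= eps * (t - a) * E a).
  { apply Rmult_le_pos; [apply Rmult_le_pos|left; apply laplace_weight_pos]; lra. }
  assert (mass_le : eps * RInt E a t <= eps * (eps / m)).
  { apply Rmult_le_compat_l; [lra|apply RInt_laplace_weight_le]. }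
  apply Rmult_le_reg_l with m; [lra|].
  replace (m * (eps / m) ^ 2) with (eps * (eps / m)) by (field; lra).
  lra.
Qed.

Lemma abs_RInt_laplace_weight_head_le (g : R -> R) :
  (forall x, continuous g x) -> 0 <= a -> (forall x, 0 < x < a -> 0 <= f x) ->
  Rabs (RInt (fun s => E s * g s) 0 a)
  <= 4 / (m * (t - a)) ^ 2 * RInt (fun s => Rabs (g s)) 0 a * eps ^ 2.
Proof.
  intros g_cont a_nonneg f_nonneg. pose proof continuous_laplace_weight as E_cont.
  set (w := 4 / (m * (t - a)) ^ 2 * eps ^ 2).
  replace (4 / (m * (t - a)) ^ 2 * RInt (fun s => Rabs (g s)) 0 a * eps ^ 2)
    with (w * RInt (fun s => Rabs (g s)) 0 a) by (unfold w; ring).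
  rewrite <- RInt_Rmult_l by solve_ex_RInt.
  eapply Rle_trans; [apply abs_RInt_le; [easy|solve_ex_RInt]|].
  apply RInt_le; [easy|solve_ex_RInt|solve_ex_RInt|]. intros x x_range.
  rewrite Rabs_mult, (Rabs_pos_eq (E x)) by (left; apply laplace_weight_pos).
  apply Rmult_le_compat_r; [apply Rabs_pos|].
  apply Rle_trans with (E a); [apply laplace_weight_le; [lra|intros; apply f_nonneg; lra]|].
  apply laplace_weight_le_sqr_inv.
Qed.

Lemma abs_RInt_increment_laplace_weight_le (h : R -> R) (K : R) :
  (forall x, continuous h x) -> left_lipschitz_at h a t K ->
  Rabs (RInt (fun s => (h s - h t) * E s) a t) <= K * (eps / m) ^ 2.
Proof.
  intros h_cont h_lip. pose proof continuous_laplace_weight as E_cont.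
  eapply Rle_trans; [apply abs_RInt_le; [lra|solve_ex_RInt]|].
  apply Rle_trans with (RInt (fun s => K * ((t - s) * E s)) a t).
  - apply RInt_le; [lra|solve_ex_RInt|solve_ex_RInt|]. intros x x_range.
    rewrite Rabs_mult, (Rabs_pos_eq (E x)) by (left; apply laplace_weight_pos).
    rewrite <- Rmult_assoc. apply Rmult_le_compat_r; [left; apply laplace_weight_pos|].
    apply h_lip; lra.
  - rewrite RInt_Rmult_l by solve_ex_RInt.
    apply Rmult_le_compat_l; [exact (left_lipschitz_at_nonneg h a t K a_lt_t h_lip)|].
    apply RInt_dist_laplace_weight_le.
Qed.

Lemma Neps_sub_leading_le (g : R -> R) (Kf Kg : R) :
  (forall x, continuous g x) -> 0 <= a -> (forall x, 0 < x < a -> 0 <= f x) ->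
  left_lipschitz_at f a t Kf -> left_lipschitz_at g a t Kg ->
  Rabs (Neps f g eps t - eps * (g t / f t))
  <= (4 / (m * (t - a)) ^ 2 * RInt (fun s => Rabs (g s)) 0 a + Kg / m ^ 2
      + Rabs (g t / f t) * (Kf / m ^ 2 + 1 / (m * (t - a)))) * eps ^ 2.
Proof.
  intros g_cont a_nonneg f_nonneg f_lip g_lip.
  assert (ft_pos : 0 < f t) by (apply Rlt_le_trans with m; [lra|apply f_ge_m; lra]).
  rewrite (Neps_sub_leading g a g_cont) by lra.
  pose proof (abs_RInt_laplace_weight_head_le g g_cont a_nonneg f_nonneg) as head_le.
  pose proof (abs_RInt_increment_laplace_weight_le g Kg g_cont g_lip) as g_incr_le.
  pose proof (abs_RInt_increment_laplace_weight_le f Kf f_cont f_lip) as f_incr_le.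
  pose proof laplace_weight_le_inv as Ea_le.
  set (c := m * (t - a)) in *. set (q := g t / f t).
  set (g_incr := RInt (fun s => (g s - g t) * E s) a t) in *.
  set (f_incr := RInt (fun s => (f s - f t) * E s) a t) in *.
  assert (c_pos : 0 < c) by (apply Rmult_lt_0_compat; lra).
  assert (tail_le : Rabs (f_incr + eps * E a) <= (Kf / m ^ 2 + 1 / c) * eps ^ 2).
  { eapply Rle_trans; [apply Rabs_triang|].
    rewrite (Rabs_pos_eq (eps * E a))
      by (apply Rmult_le_pos; [lra|left; apply laplace_weight_pos]).
    assert (eps * E a <= eps * (eps / c)) by (apply Rmult_le_compat_l; lra).
    replace ((Kf / m ^ 2 + 1 / c) * eps ^ 2) with (Kf * (eps / m) ^ 2 + eps * (eps / c))
      by (field; lra).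
    lra. }
  assert (q_tail_le : Rabs q * Rabs (f_incr + eps * E a)
                      <= Rabs q * ((Kf / m ^ 2 + 1 / c) * eps ^ 2))
    by (apply Rmult_le_compat_l; [apply Rabs_pos|exact tail_le]).
  replace (Kg * (eps / m) ^ 2) with (Kg / m ^ 2 * eps ^ 2) in g_incr_le by (field; lra).
  unfold Rminus. eapply Rle_trans; [apply Rabs_triang|].
  rewrite Rabs_Ropp, Rabs_mult.
  pose proof (Rabs_triang (RInt (fun s => E s * g s) 0 a) g_incr). lra.
Qed.

End Bounds.
End LaplaceWeight.

Lemma Neps_asymptotics (f g : R -> R) (t af ag Kf Kg : R) :
  (forall x, continuous f x) -> (forall x, continuous g x) ->
  (forall s, 0 < s <= t -> 0 < f s) -> 0 <= af < t -> 0 <= ag < t ->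
  left_lipschitz_at f af t Kf -> left_lipschitz_at g ag t Kg ->
  exists C, forall eps, 0 < eps ->
    Rabs (Neps f g eps t - eps * (g t / f t)) <= C * eps ^ 2.
Proof.
  intros f_cont g_cont f_pos af_range ag_range f_lip g_lip.
  destruct (left_lipschitz_at_ge_half f af t Kf) as [a1 [a1_range f_ge_half]];
    [lra|apply f_pos; lra|exact f_lip|].
  set (a := Rmax a1 ag).
  assert (a_range : a1 <= a /\ ag <= a /\ a < t).
  { split; [apply Rmax_l|split; [apply Rmax_r|apply Rmax_lub_lt; lra]]. }
  eexists. intros eps eps_pos.
  apply (Neps_sub_leading_le f eps t f_cont eps_pos a (f t / 2)); auto.
  - lra.
  - pose proof (f_pos t ltac:(lra)). lra.
  - intros s s_range. apply f_ge_half. lra.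
  - lra.
  - intros x x_range. left. apply f_pos. lra.
  - apply (left_lipschitz_at_shrink f af); [lra|exact f_lip].
  - apply (left_lipschitz_at_shrink g ag); [lra|exact g_lip].
Qed.

Theorem lemma2 (T : R) (F G : R -> R) :
  0 < T ->
  C1_on 0 T F -> C1_on 0 T G ->
  F 0 = 0 ->
  (forall t, 0 < t <= T -> 0 < F t) ->
  forall t, 0 < t <= T ->
    exists C delta : R, 0 < delta /\
      forall eps, 0 < eps < delta ->
        Rabs (Neps F G eps t - eps * (G t / F t)) <= C * eps ^ 2.
Proof.
  intros T_pos F_C1 G_C1 _ F_pos t t_range.
  destruct (C1_on_extension 0 T F) as [Fc [Fc_cont Fc_eq]]; [lra|exact F_C1|].
  destruct (C1_on_extension 0 T G) as [Gc [Gc_cont Gc_eq]]; [lra|exact G_C1|].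
  destruct (C1_on_left_lipschitz_at T F t F_C1 t_range) as [aF [KF [aF_range F_lip]]].
  destruct (C1_on_left_lipschitz_at T G t G_C1 t_range) as [aG [KG [aG_range G_lip]]].
  destruct (Neps_asymptotics Fc Gc t aF aG KF KG) as [C bound]; auto.
  - intros s s_range. rewrite Fc_eq by lra. apply F_pos; lra.
  - apply (left_lipschitz_at_ext F); [intros; symmetry; apply Fc_eq; lra|exact F_lip].
  - apply (left_lipschitz_at_ext G); [intros; symmetry; apply Gc_eq; lra|exact G_lip].
  - exists C, 1. split; [lra|]. intros eps [eps_pos _].
    rewrite <- (Fc_eq t), <- (Gc_eq t) by lra.
    rewrite (Neps_ext F Fc G Gc); [now apply bound|lra| |];
      intros s s_range; symmetry; [apply Fc_eq|apply Gc_eq]; lra.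
Qed.
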